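(* Let $\Sigma$ be a finite alphabet and $L\subseteq\Sigma^{++}$ a local language. Then $L$ is regional if and only if there exist $n\ge 1$ and simple regional tile sets $\theta_1,\dots,\theta_n$ over $\Sigma\cup\{\#\}$ such that $L=\bigcup_{1\le i\le n}LOC(\theta_i)$.
   Context: A picture over $\Sigma$ is a nonempty rectangular array of symbols of $\Sigma$, $\Sigma^{++}$ the set of all of them; $p(i,j)$ is the pixel in row $i$, column $j$; for $\#\notin\Sigma$, $\hat p$ is $p$ surrounded by a one-pixel frame of $\#$'s. A tile is a $2\times 2$ picture; $\llbracket q\rrbracket$ is the set of all $2\times2$ subpictures (on consecutive rows and columns) of $q$. For a finite set $\theta$ of tiles over $\Sigma\cup\{\#\}$, $LOC(\theta)=\{p\in\Sigma^{++}:\llbracket\hat p\rrbracket\subseteq\theta\}$; $L$ is local if $L=LOC(\theta)$ for some such $\theta$. A subdomain of $p$ is a rectangle $\{x,\dots,x'\}\times\{y,\dots,y'\}$ of positions; it is $C$-homogeneous (label $C$) if all its pixels equal $C$. A homogeneous partition of $p$ is a partition of its set of positions into homogeneous subdomains; it is regional if distinct subdomains have distinct labels; $p$ is regional if it admits a regional homogeneous partition; a language is regional if all its pictures are regional. Adjacency relations: for a tile $t$ define $\mathcal H_t,\mathcal V_t\subseteq(\Sigma\cup\{\#\})^2$ by: for $i=1,2$, $t(i,1)\,\mathcal H_t\,t(i,2)$ iff $t(i,1)\ne t(i,2)$; for $j=1,2$, $t(1,j)\,\mathcal V_t\,t(2,j)$ iff $t(1,j)\neq t(2,j)$. Let $\mathcal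 A_t=\mathcal H_t\cup\mathcal V_t$, $\mathcal A'_t=\mathcal H_t^{-1}\cup\mathcal V_t$, and for a tile set $\theta$ let $\mathcal A_\theta=\bigcup_{t\in\theta}\mathcal A_t$, $\mathcal A'_\theta=\bigcup_{t\in\theta}\mathcal A'_t$. A tile set $\theta$ is simple regional if both directed graphs on vertex set $\Sigma$ with edge relations $\mathcal A_\theta\cap\Sigma^2$ and $\mathcal A'_\theta\cap\Sigma^2$ are acyclic. *)

From mathcomp Require Import all_boot.
Set Implicit Arguments. Unset Strict Implicit. Unset Printing Implicit Defensive.

Section Pictures.
Variable Sigma : finType.

Record picture := Picture {
  prows : nat;
  pcols : nat;
  ppix : 'I_prows -> 'I_pcols -> Sigma;
  prows_pos : 0 < prows;
  pcols_pos : 0 < pcols }.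

(* Symbols of Sigma u {#}: None plays the role of #. *)
Definition symb := option Sigma.

Definition tile : finType := (symb * symb * symb * symb)%type.
Definition t11 (t : tile) : symb := t.1.1.1.
Definition t12 (t : tile) : symb := t.1.1.2.
Definition t21 (t : tile) : symb := t.1.2.
Definition t22 (t : tile) : symb := t.2.

(* pixel of p at 0-based (i,j), None outside *)
Definition pixn (p : picture) (i j : nat) : symb :=
  match @insub _ (fun k => k < prows p) 'I_(prows p) i,
        @insub _ (fun k => k < pcols p) 'I_(pcols p) j with
  | Some i', Some j' => Some (ppix i' j')
  | _, _ => None
  end.

(* framed picture \hat p, 0-based indices 0..m+1, 0..n+1 *)
Definition hat (p : picture) (i j : nat) : symb :=
  if (0 < i) && (0 < j) then pixn p i.-1 j.-1 else None.

Definition tile_at (p : picture) (i j : nat) : tile :=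
  (hat p i j, hat p i j.+1, hat p i.+1 j, hat p i.+1 j.+1).

Definition tiles_of (p : picture) (t : tile) : Prop :=
  exists i j, i <= prows p /\ j <= pcols p /\ tile_at p i j = t.

Definition LOC (theta : {set tile}) (p : picture) : Prop :=
  forall t, tiles_of p t -> t \in theta.

Definition language := picture -> Prop.

Definition local (L : language) : Prop :=
  exists theta : {set tile}, forall p, L p <-> LOC theta p.

Definition subdomain (m n : nat) (B : {set 'I_m * 'I_n}) : Prop :=
  exists x x' y y' : nat, x <= x' /\ y <= y' /\
    B = [set ij : 'I_m * 'I_n | (x <= ij.1 <= x') && (y <= ij.2 <= y')].

Definition homogeneous (p : picture) (B : {set 'I_(prows p) * 'I_(pcols p)})
  (C : Sigma) : Prop :=
  forall ij, ij \in B -> ppix ij.1 ij.2 = C.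

Definition regional_partition (p : picture)
  (P : {set {set 'I_(prows p) * 'I_(pcols p)}}) : Prop :=
  partition P [set: 'I_(prows p) * 'I_(pcols p)] /\
  (forall B, B \in P -> subdomain B) /\
  exists lab : {set 'I_(prows p) * 'I_(pcols p)} -> Sigma,
    (forall B, B \in P -> homogeneous B (lab B)) /\
    (forall B1 B2, B1 \in P -> B2 \in P -> B1 != B2 -> lab B1 != lab B2).

Definition regional_pic (p : picture) : Prop :=
  exists P, @regional_partition p P.

Definition regional (L : language) : Prop :=
  forall p, L p -> regional_pic p.

Definition Hrel (t : tile) (a b : symb) : bool :=
  ((a == t11 t) && (b == t12 t) && (t11 t != t12 t)) ||
  ((a == t21 t) && (b == t22 t) && (t21 t != t22 t)).
Definition Vrel (t : tile) (a b : symb) : bool :=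
  ((a == t11 t) && (b == t21 t) && (t11 t != t21 t)) ||
  ((a == t12 t) && (b == t22 t) && (t12 t != t22 t)).
Definition Arel (t : tile) (a b : symb) : bool := Hrel t a b || Vrel t a b.
Definition A'rel (t : tile) (a b : symb) : bool := Hrel t b a || Vrel t a b.

Definition Agraph (theta : {set tile}) : rel Sigma :=
  fun x y => [exists t in theta, Arel t (Some x) (Some y)].
Definition A'graph (theta : {set tile}) : rel Sigma :=
  fun x y => [exists t in theta, A'rel t (Some x) (Some y)].

Definition acyclic (e : rel Sigma) : Prop :=
  forall (x : Sigma) (s : seq Sigma), ~~ path e x (rcons s x).

Definition simple_regional (theta : {set tile}) : Prop :=
  acyclic (Agraph theta) /\ acyclic (A'graph theta).

End Pictures.

From mathcomp Require Import all_boot zify.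
From Stdlib Require Import Classical.
Set Implicit Arguments. Unset Strict Implicit. Unset Printing Implicit Defensive.

(* The pivot is a geometric notion on grids (pictures seen as functions
   nat -> nat -> option Sigma, None outside the picture): a grid is [convex]
   when, for any two cells of the same colour c, every cell of their bounding
   box has colour c.  We prove, for a grid g and a colour relation e containing
   every "left of / above" adjacency of distinct colours ([grid_edge g]):
   - if e and the analogous relation e' of the column-mirrored grid are
     acyclic, then g is convex (a monochromatic box is reached from its
     corners along monotone paths, so a second colour would close a cycle);
   - if g is convex and e is exactly [grid_edge g], then e is acyclic
     (the staircase argument of [Section Staircase]).
   For a picture p, convexity is equivalent to regionality (each colour class
   is a rectangle), and the relations A and A' of the tile set of p are the
   adjacency relations of p and of its mirror image.  Hence p is regional iff
   its own tile set is simple regional, and any picture of LOC(theta) with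
   theta simple regional is regional.  The theorem follows by taking for the
   theta_i all simple regional subsets of th. *)

Definition betw (x y z : nat) := (x <= z <= y) || (y <= z <= x).

Lemma betw_l x y : betw x y x. Proof. rewrite /betw; lia. Qed.
Lemma betw_r x y : betw x y y. Proof. rewrite /betw; lia. Qed.

Lemma acyclic_antisym (T : finType) (e : rel T) :
  acyclic e -> forall a b, connect e a b -> connect e b a -> a = b.
Proof.
move=> acyc a b /connectP[p pab lab] /connectP[q qba lba].
apply/eqP/negPn/negP => ab.
case: p pab lab => [|y p] pab /= lab; first by rewrite lab eqxx in ab.
have cyc : path e a (y :: p ++ q) by rewrite -cat_cons cat_path pab /= -lab qba.
have back : last y (p ++ q) = a by rewrite last_cat -lab.
by have := acyc a (belast y (p ++ q)); rewrite -back -lastI back cyc.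
Qed.

Lemma cycle_successor (T : finType) (e : rel T) x s :
  path e x (rcons s x) -> forall a, connect e a x -> exists2 b, e a b & connect e b x.
Proof.
move=> cyc a; case: (altP (a =P x)) => [-> _ | ax /connectP[[|b q] /= aq qx]].
- case: s cyc => [|y s] /= /andP[xy ys]; first by exists x.
  by exists y => //; apply/connectP; exists (rcons s x); rewrite ?last_rcons.
- by rewrite qx eqxx in ax.
- by case/andP: aq => ab bq; exists b => //; apply/connectP; exists q.
Qed.

Lemma no_infinite_ascent (P : nat -> Prop) (B : nat) :
  (forall i, P i -> i < B) -> (forall i, P i -> exists2 i', i < i' & P i') ->
  forall i, ~ P i.
Proof.
move=> bound next i; move: {2}(B - i) (leqnn (B - i)) => k.
elim: k i => [|k IH] i le_k Pi; first by have := bound i Pi; lia.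
by have [i' lt_ii' Pi'] := next i Pi; apply: (IH i') Pi'; lia.
Qed.

Section Grids.
Variable Sigma : finType.
Implicit Types (g : nat -> nat -> option Sigma) (a b c : Sigma).

Definition hstep g a b := exists i j, g i j = Some a /\ g i j.+1 = Some b.
Definition vstep g a b := exists i j, g i j = Some a /\ g i.+1 j = Some b.
Definition grid_edge g a b := a != b /\ (hstep g a b \/ vstep g a b).

Definition convex g := forall i j i' j' k l c, g i j = Some c -> g i' j' = Some c ->
  betw i i' k -> betw j j' l -> g k l = Some c.

Definition mirror N g i j := if j < N then g i (N.-1 - j) else None.

Lemma grid_edge_cell g a b : grid_edge g a b ->
  exists i j, g i j = Some a /\ (g i j.+1 = Some b \/ g i.+1 j = Some b).
Proof. by case=> _ [] [i [j [ga gb]]]; exists i, j; auto. Qed.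

Lemma convex_box g i1 j1 i2 j2 i3 j3 i4 j4 k l c : convex g ->
  g i1 j1 = Some c -> g i2 j2 = Some c -> g i3 j3 = Some c -> g i4 j4 = Some c ->
  i1 <= k <= i2 -> j3 <= l <= j4 -> g k l = Some c.
Proof.
move=> conv g1 g2 g3 g4 bk bl.
have gk1 : g k j1 = Some c by apply: conv g1 g2 _ (betw_l _ _); rewrite /betw bk.
have gk3 : g k j3 = Some c by apply: conv g3 gk1 (betw_r _ _) (betw_l _ _).
have gk4 : g k j4 = Some c by apply: conv g4 gk1 (betw_r _ _) (betw_l _ _).
by apply: conv gk3 gk4 (betw_l _ _) _; rewrite /betw bl.
Qed.

Lemma mirrorE N g i j : j < N -> mirror N g i (N.-1 - j) = g i j.
Proof. by move=> lt_jN; rewrite /mirror ifT; [congr g; lia | lia]. Qed.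

Lemma mirror_convex N g : convex g -> convex (mirror N g).
Proof.
rewrite /mirror => conv i j i' j' k l c.
case: ltnP => // lt_jN; case: ltnP => // lt_j'N gij gij' bk bl.
have lt_lN : l < N by move: bl; rewrite /betw; lia.
rewrite lt_lN; apply: conv gij gij' bk _; move: bl; rewrite /betw; lia.
Qed.

Lemma connect_edge (e : rel Sigma) a b : (a != b -> e a b) -> connect e a b.
Proof. by case: (altP (a =P b)) => [-> | ab] eab; [exact: connect0 | exact/connect1/eab]. Qed.

Section Support.
Variables (g : nat -> nat -> option Sigma) (m N : nat).
Hypothesis g_supp : forall i j, (g i j != None) = (i < m) && (j < N).

Lemma grid_some i j : i < m -> j < N -> exists c, g i j = Some c.
Proof.
by move=> lt_im lt_jN; move: (g_supp i j); rewrite lt_im lt_jN; case: (g i j) => // c; exists c.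
Qed.

Lemma grid_range i j c : g i j = Some c -> i < m /\ j < N.
Proof. by move=> gij; move: (g_supp i j); rewrite gij => /esym/andP. Qed.

Lemma mirror_supp i j : (mirror N g i j != None) = (i < m) && (j < N).
Proof.
rewrite /mirror; case: ltnP => [lt_jN | _]; last by rewrite andbF.
have lt_N : N.-1 - j < N by lia.
by rewrite g_supp lt_N andbT.
Qed.

Lemma hstep_mirror a b : hstep (mirror N g) a b <-> hstep g b a.
Proof.
split=> [[i [j []]] | [i [j [gb ga]]]].
  rewrite /mirror; case: ltnP => // lt_jN ga; case: ltnP => // lt_j1N gb.
  by exists i, (N.-1 - j.+1); rewrite gb -ga; split=> //; congr g; lia.
have [_ lt_j1N] := grid_range ga.
exists i, (N.-1 - j.+1); have -> : (N.-1 - j.+1).+1 = N.-1 - j by lia.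
by rewrite !mirrorE //; lia.
Qed.

Lemma vstep_mirror a b : vstep (mirror N g) a b <-> vstep g a b.
Proof.
split=> [[i [j []]] | [i [j [ga gb]]]].
  by rewrite /mirror; case: ltnP => // lt_jN ga gb; exists i, (N.-1 - j).
have [_ lt_jN] := grid_range ga.
by exists i, (N.-1 - j); rewrite !mirrorE.
Qed.

Lemma grid_edge_mirror a b :
  grid_edge (mirror N g) a b <-> a != b /\ (hstep g b a \/ vstep g a b).
Proof. by rewrite /grid_edge hstep_mirror vstep_mirror. Qed.

Section Monotone.
Variable e : rel Sigma.
Hypothesis edge_e : forall a b, grid_edge g a b -> e a b.

Lemma connect_right i j l a b : g i j = Some a -> g i (j + l) = Some b -> connect e a b.
Proof.
move=> ga; elim: l b => [|l IH] b gb; first by move: gb; rewrite addn0 ga => -[->].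
have [lt_im lt_jlN] := grid_range gb.
have [b' gb'] : exists b', g i (j + l) = Some b' by apply: grid_some; lia.
apply: connect_trans (IH _ gb') (connect_edge _) => ne_b'b.
by apply: edge_e; split=> //; left; exists i, (j + l); rewrite -addnS.
Qed.

Lemma connect_down_right i j k l a b :
  g i j = Some a -> g (i + k) (j + l) = Some b -> connect e a b.
Proof.
move=> ga; elim: k b => [|k IH] b gb; first by move: gb; rewrite addn0; exact: connect_right.
have [lt_ikm lt_jlN] := grid_range gb.
have [b' gb'] : exists b', g (i + k) (j + l) = Some b' by apply: grid_some; lia.
apply: connect_trans (IH _ gb') (connect_edge _) => ne_b'b.
by apply: edge_e; split=> //; right; exists (i + k), (j + l); rewrite -addnS.
Qed.

Hypothesis acyclic_e : acyclic e.

Lemma monotone_convex i j i' j' k l c : g i j = Some c -> g i' j' = Some c ->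
  i <= k <= i' -> j <= l <= j' -> g k l = Some c.
Proof.
move=> gc gc' /andP[le_ik le_ki'] /andP[le_jl le_lj'].
have [lt_i'm lt_j'N] := grid_range gc'.
have [d gd] := grid_some (leq_ltn_trans le_ki' lt_i'm) (leq_ltn_trans le_lj' lt_j'N).
rewrite gd; congr Some; apply: (acyclic_antisym acyclic_e).
  by apply: (connect_down_right (k := i' - k) (l := j' - l) gd); rewrite !subnKC.
by apply: (connect_down_right (k := k - i) (l := l - j) gc); rewrite !subnKC.
Qed.

End Monotone.
End Support.

(* Acyclicity of the adjacency relations of g and of its mirror forces
   convexity: the mirror handles boxes spanned towards the lower left. *)
Lemma convex_of_acyclic g m N (e e' : rel Sigma) :
  (forall i j, (g i j != None) = (i < m) && (j < N)) ->
  acyclic e -> (forall a b, grid_edge g a b -> e a b) ->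
  acyclic e' -> (forall a b, grid_edge (mirror N g) a b -> e' a b) ->
  convex g.
Proof.
move=> g_supp acyc edge_e acyc' edge_e' i j i' j' k l c.
wlog le_ii' : i j i' j' / i <= i'.
  move=> sym; case: (leqP i i') => [|/ltnW] le gc gc' bk bl; first exact: sym gc gc' bk bl.
  by apply: sym le gc' gc _ _; move: bk bl; rewrite /betw; lia.
move=> gc gc' bk /orP[] bl.
  by apply: (monotone_convex g_supp edge_e acyc gc gc') => //; move: bk; rewrite /betw; lia.
have [_ lt_jN] := grid_range g_supp gc; have [_ lt_j'N] := grid_range g_supp gc'.
have lt_lN : l < N by lia.
rewrite -(mirrorE g k lt_lN); rewrite -(mirrorE g i lt_jN) in gc.
rewrite -(mirrorE g i' lt_j'N) in gc'.
by apply: (monotone_convex (mirror_supp g_supp) edge_e' acyc' gc gc'); move: bk; rewrite /betw; lia.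
Qed.

End Grids.

(* Let g be convex and e its adjacency relation, and
   suppose some nonempty set W of colours is closed under e-predecessors while
   every colour of W has an e-successor in W (as the colours reaching a point
   of an e-cycle would be).  The cells carrying W-colours form a staircase
   (a down-set of the grid).  Call a cell (i, w) a corner when it is the last
   W-cell of its row and its colour does not occur above row i.  Following
   the successor of a corner's colour always leads to a corner in a strictly
   lower row, which is impossible in a finite grid. *)
Section Staircase.
Variable Sigma : finType.
Variables (g : nat -> nat -> option Sigma) (m N : nat).
Hypothesis g_supp : forall i j, (g i j != None) = (i < m) && (j < N).
Hypothesis g_convex : convex g.
Variable e : rel Sigma.
Hypothesis e_edge : forall a b, e a b <-> grid_edge g a b.

Variable W : pred Sigma.
Hypothesis W_pred : forall a b, e a b -> W b -> W a.
Hypothesis W_succ : forall a, W a -> exists2 b, e a b & W b.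

Definition W_cell i j := if g i j is Some c then W c else false.

Lemma W_cell_range i j : W_cell i j -> i < m /\ j < N.
Proof. by rewrite /W_cell; case gij: (g i j) => [c|] // _; exact: grid_range gij. Qed.

Lemma W_cell_colour i j : W_cell i j -> exists2 c, g i j = Some c & W c.
Proof. by rewrite /W_cell; case: (g i j) => // c; exists c. Qed.

Lemma W_cell_left i j : W_cell i j.+1 -> W_cell i j.
Proof.
rewrite /W_cell; case gb: (g i j.+1) => [b|] // Wb.
have [lt_im lt_j1N] := grid_range g_supp gb.
have [a ga] := grid_some g_supp lt_im (ltnW lt_j1N); rewrite ga.
case: (altP (a =P b)) => [-> // | ab]; apply: W_pred Wb; apply/e_edge.
by split=> //; left; exists i, j.
Qed.

Lemma W_cell_up i j : W_cell i.+1 j -> W_cell i j.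
Proof.
rewrite /W_cell; case gb: (g i.+1 j) => [b|] // Wb.
have [lt_i1m lt_jN] := grid_range g_supp gb.
have [a ga] := grid_some g_supp (ltnW lt_i1m) lt_jN; rewrite ga.
case: (altP (a =P b)) => [-> // | ab]; apply: W_pred Wb; apply/e_edge.
by split=> //; right; exists i, j.
Qed.

Lemma W_cell_down_closed i j i' j' : W_cell i j -> i' <= i -> j' <= j -> W_cell i' j'.
Proof.
have decr (f : nat -> bool) : (forall k, f k.+1 -> f k) -> {homo f : k l / k <= l >-> l -> k}.
  by move=> fS; apply: homo_leq => [// | y x z yx zy /zy /yx // | k /fS].
move=> Wij le_i'i le_j'j.
have Wij' : W_cell i j' := decr (W_cell i) (@W_cell_left i) j' j le_j'j Wij.
exact: (decr (W_cell ^~ j') (fun k => @W_cell_up k j') i' i le_i'i Wij').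
Qed.

Lemma row_end i j : W_cell i j -> exists2 w, j <= w & W_cell i w /\ ~~ W_cell i w.+1.
Proof.
move=> Wij; have bound k : W_cell i k -> k <= N by case/W_cell_range => _ /ltnW.
case: (ex_maxnP (ex_intro _ j Wij) bound) => w Wiw maxw.
by exists w; [exact: maxw | split; last by apply/negP => /maxw; rewrite ltnn].
Qed.

Definition corner i w :=
  [/\ W_cell i w, ~~ W_cell i w.+1 & forall i' j', g i' j' = g i w -> i <= i'].

Lemma corner_bound i w i' j : corner i w -> W_cell i' j -> i <= i' -> j <= w.
Proof.
case=> _ notW _ Wi'j le_ii'; rewrite leqNgt; apply: contra notW => lt_wj.
exact: W_cell_down_closed Wi'j le_ii' lt_wj.
Qed.

Lemma corner_start : (exists a, W a) -> exists w, corner 0 w.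
Proof.
case=> a Wa; have [b /e_edge/grid_edge_cell[i [j [ga _]]] _] := W_succ Wa.
have Wij : W_cell i j by rewrite /W_cell ga.
have [w _ [W0w notW]] := row_end (W_cell_down_closed Wij (leq0n i) (leq0n j)).
by exists w.
Qed.

Lemma corner_right_exit i w i' j' c d : corner i w -> g i w = Some c ->
  g i' j' = Some c -> g i' j'.+1 = Some d -> W d -> d = c.
Proof.
move=> cw giw gc gd Wd; have [_ _ top] := cw.
have le_ii' : i <= i' by apply: (top i' j'); rewrite gc giw.
have le_j1w : j'.+1 <= w by apply: corner_bound cw _ le_ii'; rewrite /W_cell gd.
suff : g i' j'.+1 = Some c by rewrite gd => -[].
by apply: g_convex giw gc _ _; rewrite /betw; lia.
Qed.

Lemma corner_down_exit i w i' j' c d : corner i w -> g i w = Some c ->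
  g i' j' = Some c -> g i'.+1 j' = Some d -> W d -> c != d ->
  exists w', corner i'.+1 w'.
Proof.
move=> cw giw gc gd Wd ne_cd; have [_ _ top] := cw.
have le_ii' : i <= i' by apply: (top i' j'); rewrite gc giw.
have [w' le_j'w' [Ww' notWw']] :
    exists2 w', j' <= w' & W_cell i'.+1 w' /\ ~~ W_cell i'.+1 w'.+1.
  by apply: row_end; rewrite /W_cell gd.
have le_w'w : w' <= w by apply: corner_bound cw Ww' _; lia.
have gc' : g i' w' = Some c by apply: g_convex gc giw _ _; rewrite /betw; lia.
have [c' gc'' _] := W_cell_colour Ww'.
have ne_cc' : c' != c.
  apply: contraNneq ne_cd => ec'; rewrite ec' in gc''.
  suff : g i'.+1 j' = Some c by rewrite gd => -[->].
  by apply: g_convex gc gc'' _ _; rewrite /betw; lia.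
exists w'; split=> // i2 j2 g2; rewrite leqNgt; apply/negP => lt_i2.
suff : g i' w' = Some c' by rewrite gc' => -[ec]; rewrite ec eqxx in ne_cc'.
by rewrite gc'' in g2; apply: g_convex g2 gc'' _ _; rewrite /betw; lia.
Qed.

Lemma corner_next i w : corner i w -> exists2 i', i < i' & exists w', corner i' w'.
Proof.
move=> cw; have [/W_cell_colour[c giw Wc] _ top] := cw.
have [d /e_edge edge_cd Wd] := W_succ Wc; have [ne_cd _] := edge_cd.
have [i' [j' [gc [gd | gd]]]] := grid_edge_cell edge_cd.
  by have dc := corner_right_exit cw giw gc gd Wd; rewrite dc eqxx in ne_cd.
exists i'.+1; last exact: corner_down_exit cw giw gc gd Wd ne_cd.
by rewrite ltnS; apply: (top i' j'); rewrite gc giw.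
Qed.

Lemma no_closed_colour_set a : ~~ W a.
Proof.
apply/negP => Wa; have [w c0w] := corner_start (ex_intro _ a Wa).
apply: (no_infinite_ascent (P := fun i => exists w, corner i w) (B := m)) (ex_intro _ w c0w).
  by move=> i [w' [/W_cell_range[]]].
by move=> i [w' /corner_next].
Qed.

End Staircase.

(* The adjacency relation of a convex grid is acyclic: the colours reaching
   a vertex of a cycle would form a set W as above. *)
Lemma acyclic_of_convex (Sigma : finType) g m N (e : rel Sigma) :
  (forall i j, (g i j != None) = (i < m) && (j < N)) -> convex g ->
  (forall a b, e a b <-> grid_edge g a b) -> acyclic e.
Proof.
move=> g_supp g_convex e_edge x s; apply/negP => cyc.
have W_pred a b : e a b -> connect e b x -> connect e a x.
  by move=> eab; apply: connect_trans (connect1 eab).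
have := no_closed_colour_set g_supp g_convex e_edge W_pred (cycle_successor cyc) x.
by rewrite connect0.
Qed.

Section Pictures.
Variable Sigma : finType.
Implicit Types (p : picture Sigma) (a b : Sigma) (theta : {set tile Sigma}).

Lemma pixn_in p i j (lt_i : i < prows p) (lt_j : j < pcols p) :
  pixn p i j = Some (ppix (Ordinal lt_i) (Ordinal lt_j)).
Proof.
rewrite /pixn; case: insubP => [i' _ ei|]; last by rewrite lt_i.
case: insubP => [j' _ ej|]; last by rewrite lt_j.
by congr (Some (ppix _ _)); apply: val_inj.
Qed.

Lemma pixn_ord p (x : 'I_(prows p)) (y : 'I_(pcols p)) : pixn p x y = Some (ppix x y).
Proof.
by rewrite (pixn_in (ltn_ord x) (ltn_ord y)); congr (Some (ppix _ _)); apply: val_inj.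
Qed.

Lemma pixn_supp p i j : (pixn p i j != None) = (i < prows p) && (j < pcols p).
Proof.
rewrite /pixn; case: insubP => [i' lt_i _ | /negbTE ->] //=.
by case: insubP => [j' lt_j _ | /negbTE ->]; rewrite ?lt_i ?andbF.
Qed.

Lemma pixn_cell p i j c : pixn p i j = Some c ->
  exists (x : 'I_(prows p)) (y : 'I_(pcols p)), i = x /\ j = y /\ ppix x y = c.
Proof.
move=> pc; have [lt_i lt_j] := grid_range (pixn_supp p) pc.
by exists (Ordinal lt_i), (Ordinal lt_j); move: pc; rewrite (pixn_in lt_i lt_j) => -[].
Qed.

Definition tileset p : {set tile Sigma} :=
  [set t | [exists i : 'I_(prows p).+1, exists j : 'I_(pcols p).+1, tile_at p i j == t]].

Lemma tilesetP p t : reflect (tiles_of p t) (t \in tileset p).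
Proof.
rewrite inE; apply: (iffP existsP) => [[i /existsP[j /eqP <-]] | [i [j [le_i [le_j <-]]]]].
  by exists i, j; split; [exact: (ltn_ord i) | split; [exact: (ltn_ord j) |]].
have lt_i : i < (prows p).+1 by []; have lt_j : j < (pcols p).+1 by [].
by exists (Ordinal lt_i); apply/existsP; exists (Ordinal lt_j).
Qed.

Lemma LOC_tileset theta p : LOC theta p <-> tileset p \subset theta.
Proof.
split=> [locp | /subsetP sub t /tilesetP]; last exact: sub.
by apply/subsetP => t /tilesetP; exact: locp.
Qed.

Lemma hatS p i j : hat p i.+1 j.+1 = pixn p i j. Proof. by []. Qed.

Lemma hat_cell p i j a : hat p i j = Some a ->
  exists i' j', i = i'.+1 /\ j = j'.+1 /\ pixn p i' j' = Some a.
Proof. by case: i j => [|i] [|j] //; exists i, j. Qed.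

Lemma hat_hstep p i j a b : hat p i j = Some a -> hat p i j.+1 = Some b -> hstep (pixn p) a b.
Proof. by move=> /hat_cell[i' [j' [-> [-> pa]]]] pb; exists i', j'. Qed.

Lemma hat_vstep p i j a b : hat p i j = Some a -> hat p i.+1 j = Some b -> vstep (pixn p) a b.
Proof. by move=> /hat_cell[i' [j' [-> [-> pa]]]] pb; exists i', j'. Qed.

Lemma tile_at_in p i j a : pixn p i j = Some a -> tile_at p i.+1 j.+1 \in tileset p.
Proof. by move=> /(grid_range (pixn_supp p))[lt_i lt_j]; apply/tilesetP; exists i.+1, j.+1. Qed.

Lemma Hrel_tileset p a b :
  (exists2 t, t \in tileset p & Hrel t (Some a) (Some b)) <-> a != b /\ hstep (pixn p) a b.
Proof.
split=> [[t /tilesetP[i [j [_ [_ <-]]]]] | [ne_ab [i [j [pa pb]]]]].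
  rewrite /Hrel /t11 /t12 /t21 /t22 /=.
  by case/orP=> /andP[/andP[/eqP ea /eqP eb]]; rewrite -ea -eb => ne;
    split=> //; apply: hat_hstep (esym ea) (esym eb).
exists (tile_at p i.+1 j.+1); first exact: tile_at_in pa.
by rewrite /Hrel /t11 /t12 /= !hatS pa pb !eqxx /= (inj_eq (@Some_inj _)) ne_ab.
Qed.

Lemma Vrel_tileset p a b :
  (exists2 t, t \in tileset p & Vrel t (Some a) (Some b)) <-> a != b /\ vstep (pixn p) a b.
Proof.
split=> [[t /tilesetP[i [j [_ [_ <-]]]]] | [ne_ab [i [j [pa pb]]]]].
  rewrite /Vrel /t11 /t12 /t21 /t22 /=.
  by case/orP=> /andP[/andP[/eqP ea /eqP eb]]; rewrite -ea -eb => ne;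
    split=> //; apply: hat_vstep (esym ea) (esym eb).
exists (tile_at p i.+1 j.+1); first exact: tile_at_in pa.
by rewrite /Vrel /t11 /t21 /= !hatS pa pb !eqxx /= (inj_eq (@Some_inj _)) ne_ab.
Qed.

Lemma Agraph_tileset p a b : Agraph (tileset p) a b <-> grid_edge (pixn p) a b.
Proof.
split=> [/existsP[t /andP[tp /orP[h | v]]] | [ne_ab [h | v]]].
- by have [ne_ab st] := (Hrel_tileset p a b).1 (ex_intro2 _ _ t tp h); split; [|left].
- by have [ne_ab st] := (Vrel_tileset p a b).1 (ex_intro2 _ _ t tp v); split; [|right].
- have [t tp h'] := (Hrel_tileset p a b).2 (conj ne_ab h).
  by apply/existsP; exists t; rewrite tp /Arel h'.
- have [t tp v'] := (Vrel_tileset p a b).2 (conj ne_ab v).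
  by apply/existsP; exists t; rewrite tp /Arel v' orbT.
Qed.

Lemma A'graph_tileset p a b :
  A'graph (tileset p) a b <-> grid_edge (mirror (pcols p) (pixn p)) a b.
Proof.
rewrite (grid_edge_mirror (pixn_supp p)).
split=> [/existsP[t /andP[tp /orP[h | v]]] | [ne_ab [h | v]]].
- have [ne_ba st] := (Hrel_tileset p b a).1 (ex_intro2 _ _ t tp h).
  by split; [rewrite eq_sym | left].
- by have [ne_ab st] := (Vrel_tileset p a b).1 (ex_intro2 _ _ t tp v); split; [|right].
- have ne_ba : b != a by rewrite eq_sym.
  have [t tp h'] := (Hrel_tileset p b a).2 (conj ne_ba h).
  by apply/existsP; exists t; rewrite tp /A'rel h'.
- have [t tp v'] := (Vrel_tileset p a b).2 (conj ne_ab v).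
  by apply/existsP; exists t; rewrite tp /A'rel v' orbT.
Qed.

Lemma Agraph_subset theta theta' a b :
  theta \subset theta' -> Agraph theta a b -> Agraph theta' a b.
Proof.
by move=> /subsetP sub /existsP[t /andP[/sub tin h]]; apply/existsP; exists t; rewrite tin.
Qed.

Lemma A'graph_subset theta theta' a b :
  theta \subset theta' -> A'graph theta a b -> A'graph theta' a b.
Proof.
by move=> /subsetP sub /existsP[t /andP[/sub tin h]]; apply/existsP; exists t; rewrite tin.
Qed.

End Pictures.

Section Regional.
Variable Sigma : finType.
Implicit Types (p : picture Sigma) (c : Sigma).

(* A regional partition is the partition into colour classes, which are
   rectangles; hence regional pictures are convex. *)
Lemma convex_of_regional p : regional_pic p -> convex (pixn p).
Proof.
case=> P [partP [rectP [lab [homP distP]]]] i j i' j' k l c.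
move=> /pixn_cell[x [y [-> [-> pxy]]]] /pixn_cell[x' [y' [-> [-> pxy']]]] bk bl.
have block u : exists2 B, B \in P & u \in B.
  by have := in_setT u; rewrite -(cover_partition partP) => /bigcupP[B]; exists B.
have [B BP xyB] := block (x, y); have [B' B'P xyB'] := block (x', y').
have labB : lab B = c by rewrite -pxy (homP _ BP _ xyB).
have eBB' : B = B'.
  apply/eqP/negPn/negP => /(distP _ _ BP B'P); rewrite labB -pxy' (homP _ B'P _ xyB').
  by rewrite eqxx.
subst B'; have [x0 [x1 [y0 [y1 [_ [_ EB]]]]]] := rectP _ BP.
move: xyB xyB'; rewrite EB !inE /= => inxy inxy'.
have ltx := ltn_ord x; have ltx' := ltn_ord x'.
have lty := ltn_ord y; have lty' := ltn_ord y'.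
have lt_k : k < prows p by move: bk; rewrite /betw; lia.
have lt_l : l < pcols p by move: bl; rewrite /betw; lia.
rewrite (pixn_in lt_k lt_l) -labB; congr Some.
apply: (homP _ BP (Ordinal lt_k, Ordinal lt_l)).
by rewrite EB inE /=; move: bk bl; rewrite /betw; lia.
Qed.

(* In a convex picture a nonempty colour class is the rectangle spanned by
   its topmost, bottommost, leftmost and rightmost cells. *)
Lemma monochrome_rect p (B : {set 'I_(prows p) * 'I_(pcols p)}) c u :
  convex (pixn p) -> u \in B -> (forall v, (v \in B) = (ppix v.1 v.2 == c)) -> subdomain B.
Proof.
move=> conv uB memB.
have colB v : v \in B -> pixn p v.1 v.2 = Some c by rewrite memB pixn_ord => /eqP ->.
case: (arg_minnP (fun v : 'I_(prows p) * 'I_(pcols p) => val v.1) uB) => top topB minT.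
case: (arg_maxnP (fun v : 'I_(prows p) * 'I_(pcols p) => val v.1) uB) => bot botB maxB.
case: (arg_minnP (fun v : 'I_(prows p) * 'I_(pcols p) => val v.2) uB) => lft lftB minL.
case: (arg_maxnP (fun v : 'I_(prows p) * 'I_(pcols p) => val v.2) uB) => rgt rgtB maxR.
have {}maxB v : v \in B -> val v.1 <= val bot.1 := maxB v.
have {}maxR v : v \in B -> val v.2 <= val rgt.2 := maxR v.
exists top.1, bot.1, lft.2, rgt.2.
split; first exact: leq_trans (minT _ uB) (maxB _ uB).
split; first exact: leq_trans (minL _ uB) (maxR _ uB).
apply/setP => v; rewrite inE; apply/idP/idP => [vB | /andP[box1 box2]].
  by rewrite minT // maxB // minL // maxR.
rewrite memB; apply/eqP.
have := convex_box conv (colB _ topB) (colB _ botB) (colB _ lftB) (colB _ rgtB) box1 box2.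
by rewrite pixn_ord => -[].
Qed.

Lemma regional_of_convex p : convex (pixn p) -> regional_pic p.
Proof.
move=> conv; pose colour (u : 'I_(prows p) * 'I_(pcols p)) := ppix u.1 u.2.
pose u0 := (Ordinal (prows_pos p), Ordinal (pcols_pos p)).
pose lab (B : {set 'I_(prows p) * 'I_(pcols p)}) := colour (odflt u0 [pick u in B]).
pose P := preim_partition colour setT.
have blockP B : B \in P -> exists u, B = [set v in setT | colour u == colour v].
  by move=> /imsetP[u _ ->]; exists u.
have labP B u : B \in P -> u \in B -> colour u = lab B.
  move=> /blockP[x ->] uB; rewrite /lab.
  case: pickP => [v vB | /(_ u)]; last by rewrite uB.
  by move: uB vB; rewrite !inE => /eqP <- /eqP.
exists P; split; first exact: preim_partitionP.
split.
  move=> B /blockP[x ->]; apply: (monochrome_rect (c := colour x) (u := x) conv).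
    by rewrite inE in_setT /=.
  by move=> v; rewrite inE in_setT eq_sym.
exists lab; split=> [B BP v vB | B1 B2 B1P B2P]; first exact: labP.
apply: contraTneq => eqlab; rewrite negbK.
have [x1 E1] := blockP _ B1P; have [x2 E2] := blockP _ B2P.
have lab1 : colour x1 = lab B1 by apply: labP; rewrite // E1 inE in_setT /=.
have lab2 : colour x2 = lab B2 by apply: labP; rewrite // E2 inE in_setT /=.
by apply/eqP; rewrite E1 E2; apply/setP => v; rewrite !inE /= lab1 lab2 eqlab.
Qed.

End Regional.

Section Main.
Variable Sigma : finType.
Implicit Types (p : picture Sigma) (theta : {set tile Sigma}).

Lemma simple_regional_tileset p : regional_pic p -> simple_regional (tileset p).
Proof.
move/convex_of_regional => conv; split.
  exact: (acyclic_of_convex (pixn_supp p) conv (Agraph_tileset p)).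
exact: (acyclic_of_convex (mirror_supp (pixn_supp p)) (mirror_convex (N := pcols p) conv)
  (A'graph_tileset p)).
Qed.

Lemma regional_of_simple_LOC theta p : simple_regional theta -> LOC theta p -> regional_pic p.
Proof.
move=> [acyc acyc'] /LOC_tileset sub; apply: regional_of_convex.
apply: convex_of_acyclic (pixn_supp p) acyc _ acyc' _ => a b edge.
  by apply: Agraph_subset sub _; apply/Agraph_tileset.
by apply: A'graph_subset sub _; apply/A'graph_tileset.
Qed.

Lemma simple_regional0 : simple_regional (set0 : {set tile Sigma}).
Proof.
by split=> x [|y s] /=; apply/negP => /andP[/existsP[t]]; rewrite inE.
Qed.

End Main.

Lemma classical_finset (T : finType) (P : T -> Prop) :
  exists S : {set T}, forall x, x \in S <-> P x.
Proof.
suff [s sP] : exists s : seq T, forall x, x \in s <-> x \in enum T /\ P x.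
  by exists [set x in s] => x; rewrite inE sP mem_enum; split=> [[] | ].
elim: (enum T) => [|y r [s sP]]; first by exists [::] => x; split=> // -[].
case: (classic (P y)) => Py; [exists (y :: s) | exists s] => x;
  rewrite !in_cons; case: (eqVneq x y) => [-> | _] /=; rewrite ?sP; tauto.
Qed.

Theorem proposition4 (Sigma : finType) (L : language Sigma) :
  local L ->
  (regional L <->
   exists (n : nat) (theta : 'I_n -> {set tile Sigma}),
     1 <= n /\ (forall i, simple_regional (theta i)) /\
     (forall p, L p <-> exists i : 'I_n, LOC (theta i) p)).
Proof.
(* The theta_i enumerate the set S of simple regional subsets of th. *)
move=> [th locL]; split=> [regL | [n [theta [_ [simple coverL]]]] p Lp]; last first.
  by have [i LOCi] := (coverL p).1 Lp; exact: regional_of_simple_LOC (simple i) LOCi.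
have [S memS] := classical_finset (fun T => simple_regional T /\ T \subset th).
have S0 : set0 \in S by apply/memS; split; [exact: simple_regional0 | exact: sub0set].
exists #|S|, (fun i => enum_val i); split; first by apply/card_gt0P; exists set0.
split=> [i | p]; first by have /memS[] := enum_valP i.
split=> [Lp | [i /LOC_tileset sub_i]].
  have pS : tileset p \in S.
    by apply/memS; split; [exact: simple_regional_tileset (regL p Lp) | exact/LOC_tileset/locL].
  by exists (enum_rank_in pS (tileset p)); rewrite enum_rankK_in //; exact/LOC_tileset.
have /memS[_ sub] := enum_valP i.
by apply/locL/LOC_tileset; exact: subset_trans sub_i sub.
Qed.
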